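(* Let $q$ be a prime power, let $d\in\mathbb{Z}_{\geqslant 1}$, let $\mathcal{Q}_d$ be a monic irreducible polynomial in $\mathbb{F}_q[T]$ of degree $d$, and let $s,\ell\in\mathbb{Z}_{\geqslant 0}$ with $0\leqslant \ell<d$. Let $F_0=1$ and $F_i=(-1)^i+(T^{q^i}-T)F_{i-1}$ for $i\in\mathbb{Z}_{\geqslant 1}$. Then $$F_{sd+\ell}\equiv(-1)^{sd}F_\ell \pmod{\mathcal{Q}_d}.$$ *)

From mathcomp Require Import all_boot all_order all_algebra all_field.
Set Implicit Arguments. Unset Strict Implicit. Unset Printing Implicit Defensive.
Import GRing.Theory.
Local Open Scope ring_scope.

Fixpoint Fseq (F : finFieldType) (i : nat) : {poly F} :=
  match i with
  | 0 => 1
  | i'.+1 => (-1) ^+ i'.+1 + ('X^(#|F| ^ i'.+1) - 'X) * Fseq F i'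
  end.

(* Modulo the irreducible Q of degree d, T is an element of the field
   F_q[T]/(Q) of order q^d, so T^(q^(sd)) = T there.  Hence the factor
   T^(q^(sd+i)) - T of the recursion coincides with T^(q^i) - T modulo Q,
   and the recursions for F_(sd+l) and (-1)^(sd) F_l run in lockstep from
   F_(sd) = (-1)^(sd) on. *)

From mathcomp Require Import all_boot all_order all_algebra all_field.
From mathcomp Require Import ring.
Import GRing.Theory.
Local Open Scope ring_scope.

Section FseqPeriodic.
Variables (F : finFieldType) (R : comNzRingType) (f : {rmorphism {poly F} -> R}).
Variable n : nat.
Hypothesis fX_period : f 'X ^+ (#|F| ^ n) = f 'X.

Let x := f 'X.

Lemma rmorph_FseqS i :
  f (Fseq F i.+1) = (-1) ^+ i.+1 + (x ^+ (#|F| ^ i.+1) - x) * f (Fseq F i).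
Proof. by rewrite /= rmorphD rmorphM rmorphB !rmorphXn rmorphN rmorph1. Qed.

Lemma rmorph_Fseq_shift l : f (Fseq F (n + l)) = (-1) ^+ n * f (Fseq F l).
Proof.
have x_shift i : x ^+ (#|F| ^ (n + i)) = x ^+ (#|F| ^ i).
  by rewrite expnD exprM fX_period.
elim: l => [|l IHl].
  rewrite addn0 /= rmorph1 mulr1.
  case: n fX_period => [|m fXm]; first by rewrite /= rmorph1.
  by rewrite rmorph_FseqS fXm subrr mul0r addr0.
by rewrite addnS !rmorph_FseqS IHl -addnS x_shift exprD; ring.
Qed.

End FseqPeriodic.

Lemma expf_card_pow (L : finFieldType) (y : L) k : y ^+ (#|L| ^ k) = y.
Proof. by elim: k => [|k IHk]; rewrite ?expr1 // expnS exprM expf_card. Qed.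

Lemma in_qpoly_eq0 (K : fieldType) (h p : {poly K}) :
  h \is monic -> (1 < size h)%N -> (in_qpoly h p == 0) = (h %| p).
Proof.
move=> mh sh; have hE : mk_monic h = h by rewrite /mk_monic sh mh.
by rewrite -val_eqE /= -Pdiv.IdomainMonic.modpE hE.
Qed.

Theorem lemma3p1 (F : finFieldType) (d : nat) (Q : {poly F}) (s l : nat) :
  (1 <= d)%N -> Q \is monic -> irreducible_poly Q -> size Q = d.+1 ->
  (l < d)%N ->
  Q %| (Fseq F (s * d + l) - (-1) ^+ (s * d) * Fseq F l).
Proof.
move=> d_gt0 mQ iQ sQ _.
have hI : monic_irreducible_poly Q by [].
pose f : {rmorphism {poly F} -> {poly %/ Q with hI}} := in_qpoly Q.
have fX_period : f 'X ^+ (#|F| ^ (s * d)) = f 'X.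
  have cardL : #|{poly %/ Q with hI}| = (#|F| ^ d)%N by rewrite card_qfpoly sQ.
  by rewrite mulnC expnM -cardL expf_card_pow.
rewrite -in_qpoly_eq0 ?sQ // -/(f _) rmorphB rmorphM rmorphXn rmorphN rmorph1.
by rewrite rmorph_Fseq_shift // subrr.
Qed.
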